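(* For every ${\bm\theta}\in\mathbb R^N$, $$P_{\cal B}P_{{\cal C}({\bm\theta})}=P_{\cal B}P_{{\cal C}(\bar{\bm\theta})}\quad\text{on } L^2(D),$$ where $\bar{\bm\theta}$ is the orthogonal projection of ${\bm\theta}$ onto $\mathrm{ran}(H)$ with respect to the inner product $\langle\cdot,\cdot\rangle_N$.
   Context: $D=\mathbb R$ or $[0,T]$ ($T$ an odd positive integer); $L^2(D)$ is the real Hilbert space with $\langle u,v\rangle=\int_D uv\,dt$. ${\cal B}$ is the closed subspace of signals bandlimited to $[-\pi,\pi]$ and $P_{\cal B}$ the orthogonal projection onto it (sinc / Dirichlet-kernel filtering). Fix $\alpha\ge0$, $N\ge1$, instants $0=t_0<t_1<\dots<t_N$ in $D$, and $h_n(t)=e^{-\alpha(t_n-t)}\mathbf 1_{[t_{n-1},t_n)}(t)$, $n=1,\dots,N$. For ${\bm\theta}\in\mathbb R^N$, ${\cal C}({\bm\theta})=\{u\in L^2(D):\langle h_n,u\rangle=\theta_n\ \forall n\}$ and $P_{{\cal C}({\bm\theta})}$ is the orthogonal projection onto this closed affine subspace. $H:{\cal B}\to\mathbb R^N$ is the linear ''sampling operator'' $Hu=(\langle h_n,u\rangle)_{n=1}^N$. On $\mathbb R^N$ use the weighted inner product $\langle{\mathbf u},{\mathbf v}\rangle_N=\sum_{n=1}^N u_nv_n/\|h_n\|^2$. *)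

From HB Require Import structures.
From mathcomp Require Import all_boot all_order all_algebra.
From mathcomp Require Import all_classical all_reals all_analysis.
Set Implicit Arguments. Unset Strict Implicit. Unset Printing Implicit Defensive.
Import Order.TTheory GRing.Theory Num.Theory.
Import numFieldNormedType.Exports.
Local Open Scope classical_set_scope.
Local Open Scope ring_scope.

Inductive domain := DomR | DomT of nat.

Definition domain_ok (Dm : domain) : Prop :=
  match Dm with DomR => True | DomT T => (0 < T)%N /\ odd T end.

Section Setting.
Variable R : realType.
Local Notation leb := (@lebesgue_measure R).

Definition Dset (Dm : domain) : set R :=
  match Dm with DomR => setT | DomT T => [set x | 0 <= x <= T%:R] end.

(* u : R -> R represents an element of L^2(D) (only its values on D matter). *)
Definition L2 (D : set R) (f : R -> R) : Prop :=
  measurable_fun D f /\ (\int[leb]_(x in D) ((f x) ^+ 2)%:E < +oo)%E.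

Definition ip (D : set R) (f g : R -> R) : R := \int[leb]_(x in D) (f x * g x).

Definition L2eq (D : set R) (f g : R -> R) : Prop := ae_eq leb D f g.

(* On R: u is (the real part of) the inverse Fourier transform of some
   F = A + iB in L^2 supported in [-pi,pi]:
     u(t) = (1/2pi) \int_{-pi}^{pi} (A(w) cos(wt) - B(w) sin(wt)) dw  a.e.
   On [0,T] (periodic signals, Dirichlet-kernel filtering): trigonometric
   polynomials of period T whose frequencies 2 pi k / T lie in [-pi,pi],
   i.e. 2k <= T. *)
Definition bandlimited (Dm : domain) (u : R -> R) : Prop :=
  match Dm with
  | DomR =>
      exists A B : R -> R,
        L2 [set w | - pi <= w <= pi] A /\ L2 [set w | - pi <= w <= pi] B /\
        L2eq setT u (fun t => (2 * pi)^-1 *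
          \int[leb]_(w in [set w | - pi <= w <= pi])
             (A w * cos (w * t) - B w * sin (w * t)))
  | DomT T =>
      exists a b : nat -> R,
        L2eq (Dset Dm) u (fun t => a 0%N +
          \sum_(1 <= k < T.+1 | (2 * k <= T)%N)
             (a k * cos (2 * pi * k%:R * t / T%:R) +
              b k * sin (2 * pi * k%:R * t / T%:R)))
  end.

Definition inB (Dm : domain) (u : R -> R) : Prop :=
  L2 (Dset Dm) u /\ bandlimited Dm u.

Definition hfun (alpha : R) (tt : nat -> R) (n : nat) (x : R) : R :=
  if (tt n.-1 <= x) && (x < tt n) then expR (- (alpha * (tt n - x))) else 0.

(* R^N is represented by 'I_N -> R; component i stands for index i+1. *)
Definition Hop (Dm : domain) (alpha : R) (tt : nat -> R) (N : nat)
    (u : R -> R) : 'I_N -> R :=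
  fun i => ip (Dset Dm) (hfun alpha tt i.+1) u.

Definition Cset (Dm : domain) (alpha : R) (tt : nat -> R) (N : nat)
    (theta : 'I_N -> R) : set (R -> R) :=
  [set u | L2 (Dset Dm) u /\ forall i : 'I_N, Hop Dm alpha tt u i = theta i].

Definition ipN (Dm : domain) (alpha : R) (tt : nat -> R) (N : nat)
    (x y : 'I_N -> R) : R :=
  \sum_(i < N) x i * y i / ip (Dset Dm) (hfun alpha tt i.+1) (hfun alpha tt i.+1).

Definition ranH (Dm : domain) (alpha : R) (tt : nat -> R) (N : nat)
    : set ('I_N -> R) :=
  [set y | exists u, inB Dm u /\ y = Hop Dm alpha tt u].

Definition is_projL2 (D : set R) (S : set (R -> R)) (u v : R -> R) : Prop :=
  S v /\ forall w, S w ->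
    ip D (fun x => u x - v x) (fun x => u x - v x)
    <= ip D (fun x => u x - w x) (fun x => u x - w x).

Definition is_projN (Dm : domain) (alpha : R) (tt : nat -> R) (N : nat)
    (S : set ('I_N -> R)) (x y : 'I_N -> R) : Prop :=
  S y /\ forall z, S z ->
    ipN Dm alpha tt (fun i => x i - y i) (fun i => x i - y i)
    <= ipN Dm alpha tt (fun i => x i - z i) (fun i => x i - z i).

End Setting.

From HB Require Import structures.
From mathcomp Require Import all_boot all_order all_algebra.
From mathcomp Require Import all_classical all_reals all_analysis.
From mathcomp Require Import ring lra measurable_realfun.
Set Implicit Arguments. Unset Strict Implicit. Unset Printing Implicit Defensive.
Import Order.TTheory GRing.Theory Num.Theory.
Import numFieldNormedType.Exports.
Local Open Scope classical_set_scope.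
Local Open Scope ring_scope.

(** A projection onto C(θ) differs from u by a vector orthogonal to
    ker H = {h_1, ..., h_N}^⊥, and the difference v1 - v2 of the two
    projections has inner product θ_n - θ̄_n with h_n.  As the h_n have
    disjoint supports, a bandlimited b splits as b = k + Σ c_n h_n with
    k ∈ ker H and c_n = <h_n, b> / ||h_n||², so
    <v1 - v2, b> = <θ - θ̄, Hb>_N = 0 because θ - θ̄ ⊥_N ran H.  Hence
    w1 - w2 = (v1 - v2) - (v1 - w1) + (v2 - w2) lies in B and is orthogonal
    to B, so it vanishes. *)

Lemma lin_eq0_of_quad_ge0 (R : realFieldType) (a b : R) : 0 <= b ->
  (forall t, 0 <= 2 * t * a + t ^+ 2 * b) -> a = 0.
Proof.
move=> b_ge0 quad_ge0.
have b1_gt0 : 0 < b + 1 by rewrite ltr_wpDl.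
have := quad_ge0 (- a / (b + 1)).
have -> : 2 * (- a / (b + 1)) * a + (- a / (b + 1)) ^+ 2 * b =
   - (a ^+ 2 * (b + 2)) / (b + 1) ^+ 2 by field; rewrite gt_eqF.
rewrite pmulr_lge0 ?invr_gt0 ?exprn_gt0 // oppr_ge0 => ?; nra.
Qed.

Section L2InnerProduct.
Variables (R : realType) (D : set R).
Hypothesis mD : measurable D.
Local Notation leb := (@lebesgue_measure R).

Lemma L2_integrableP f : L2 D f <->
  measurable_fun D f /\ leb.-integrable D (EFin \o (fun x => f x ^+ 2)).
Proof.
have abs_sqr (g : R -> R) :
    (\int[leb]_(x in D) `|(EFin \o (fun x => (g x ^+ 2)%R)) x| =
    \int[leb]_(x in D) ((g x) ^+ 2)%:E)%E.
  by apply: eq_integral => x _; rewrite /= ger0_norm ?sqr_ge0.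
split=> [[mf fi]|[mf /integrableP [_ fi]]]; split=> //; last by rewrite -abs_sqr.
by apply/integrableP; split; [exact/measurable_EFinP/measurable_funX|rewrite abs_sqr].
Qed.

Lemma L2_mul_integrable f g : L2 D f -> L2 D g ->
  leb.-integrable D (EFin \o (fun x => f x * g x)).
Proof.
move=> /L2_integrableP [mf fi] /L2_integrableP [mg gi].
have sqr_sum_int : leb.-integrable D (EFin \o (fun x => f x ^+ 2 + g x ^+ 2)).
  exact: (eq_integrable (mu := leb) mD _ _ _ (integrableD (mu := leb) mD fi gi)).
apply: (le_integrable (mu := leb) mD _ _ sqr_sum_int).
  exact/measurable_EFinP/measurable_funM.
move=> x _; rewrite /= lee_fin [X in _ <= X]ger0_norm ?addr_ge0 ?sqr_ge0 // normrM.
rewrite -(real_normK (num_real (f x))) -(real_normK (num_real (g x))).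
by have := normr_ge0 (f x); have := normr_ge0 (g x); nra.
Qed.

Lemma L2_comb f g c : L2 D f -> L2 D g -> L2 D (fun x => f x + c * g x).
Proof.
move=> Lf Lg; have fgi := L2_mul_integrable Lf Lg.
move: Lf Lg => /L2_integrableP [mf fi] /L2_integrableP [mg gi].
apply/L2_integrableP; split; first exact/measurable_funD/measurable_funM.
have := integrableD (mu := leb) mD (integrableD (mu := leb) mD fi
  (integrableZl (mu := leb) mD (2 * c) fgi)) (integrableZl (mu := leb) mD (c ^+ 2) gi).
apply: (eq_integrable (mu := leb) mD) => x _ /=.
by rewrite -!EFinM -!EFinD; congr EFin; ring.
Qed.

Lemma L2_sub f g : L2 D f -> L2 D g -> L2 D (fun x => f x - g x).
Proof.
have -> : (fun x => f x - g x) = (fun x => f x + (-1) * g x).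
  by apply/funext => x; rewrite mulN1r.
exact: L2_comb.
Qed.

Lemma ipC f g : ip D f g = ip D g f.
Proof. by apply: eq_Rintegral => x _; rewrite mulrC. Qed.

Lemma ip_ge0 f : 0 <= ip D f f.
Proof. by apply: Rintegral_ge0 => x _; rewrite -expr2 sqr_ge0. Qed.

Lemma ip_combr f g h c : L2 D f -> L2 D g -> L2 D h ->
  ip D f (fun x => g x + c * h x) = ip D f g + c * ip D f h.
Proof.
move=> Lf Lg Lh; have fhi := L2_mul_integrable Lf Lh.
have cfhi : leb.-integrable D (EFin \o (fun x => c * (f x * h x))).
  apply: (eq_integrable (mu := leb) mD _ _ _ (integrableZl (mu := leb) mD c fhi)).
  by move=> x _; rewrite /= EFinM.
rewrite /ip -(RintegralZl (mu := leb) c mD fhi).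
rewrite -(RintegralD (mu := leb) mD (L2_mul_integrable Lf Lg) cfhi).
by apply: eq_Rintegral => x _; ring.
Qed.

Lemma ip_combl f g h c : L2 D f -> L2 D g -> L2 D h ->
  ip D (fun x => g x + c * h x) f = ip D g f + c * ip D h f.
Proof. by move=> *; rewrite ipC ip_combr // ![ip D f _]ipC. Qed.

Lemma ip_subl f g h : L2 D f -> L2 D g -> L2 D h ->
  ip D (fun x => g x - h x) f = ip D g f - ip D h f.
Proof.
move=> Lf Lg Lh; have := ip_combl (-1) Lf Lg Lh; rewrite mulN1r => <-.
by congr ip; apply/funext => x; rewrite mulN1r.
Qed.

Lemma ip_comb_sqr f g c : L2 D f -> L2 D g ->
  ip D (fun x => f x + c * g x) (fun x => f x + c * g x) =
  ip D f f + 2 * c * ip D f g + c ^+ 2 * ip D g g.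
Proof.
move=> Lf Lg; have Lfg := L2_comb c Lf Lg.
by rewrite ip_combl // !ip_combr // [ip D g f]ipC; ring.
Qed.

Lemma ip_orth_of_ip0 f g : L2 D f -> L2 D g -> ip D f f = 0 -> ip D f g = 0.
Proof.
move=> Lf Lg ff0; apply: (lin_eq0_of_quad_ge0 (ip_ge0 g)) => t.
by have := ip_ge0 (fun x => f x + t * g x); rewrite ip_comb_sqr // ff0 add0r.
Qed.

Lemma L2eq0_of_ip0 f : L2 D f -> ip D f f = 0 -> L2eq D f (fun _ => 0).
Proof.
move=> Lf ff0; have ffi := L2_mul_integrable Lf Lf.
have /integrableP [mff _] := ffi.
have abs0 : (\int[leb]_(x in D) `|(EFin \o (fun x => (f x * f x)%R)) x| = 0)%E.
  transitivity (\int[leb]_(x in D) (EFin \o (fun x => (f x * f x)%R)) x)%E.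
    by apply: eq_integral => x _; rewrite /= ger0_norm // -expr2 sqr_ge0.
  rewrite -(fineK (integrable_fin_num (mu := leb) mD ffi)).
  exact: (congr1 EFin ff0).
apply: filterS ((ae_eq_integral_abs leb mD mff).1 abs0) => x /= ff_eq0 Dx.
by have /eqP := ff_eq0 Dx; rewrite /cst eqe mulf_eq0 orbb => /eqP.
Qed.

Lemma L2_sum (I : Type) (r : seq I) (c : I -> R) (F : I -> R -> R) g :
  L2 D g -> (forall i, L2 D (F i)) ->
  L2 D (fun x => g x + \sum_(i <- r) c i * F i x).
Proof.
elim: r g => [|i r IH] g Lg LF.
  suff -> : (fun x => g x + \sum_(i <- [::]) c i * F i x) = g by [].
  by apply/funext => x; rewrite big_nil addr0.
have -> : (fun x => g x + \sum_(j <- i :: r) c j * F j x) =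
    (fun x => (g x + c i * F i x) + \sum_(j <- r) c j * F j x).
  by apply/funext => x; rewrite big_cons addrA.
by apply: IH => //; exact: L2_comb.
Qed.

Lemma ip_sumr (I : Type) (r : seq I) (c : I -> R) (F : I -> R -> R) f g :
  L2 D f -> L2 D g -> (forall i, L2 D (F i)) ->
  ip D f (fun x => g x + \sum_(i <- r) c i * F i x) =
  ip D f g + \sum_(i <- r) c i * ip D f (F i).
Proof.
move=> Lf; elim: r g => [|i r IH] g Lg LF.
  suff -> : (fun x => g x + \sum_(i <- [::]) c i * F i x) = g by rewrite big_nil addr0.
  by apply/funext => x; rewrite big_nil addr0.
have -> : (fun x => g x + \sum_(j <- i :: r) c j * F j x) =
    (fun x => (g x + c i * F i x) + \sum_(j <- r) c j * F j x).
  by apply/funext => x; rewrite big_cons addrA.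
have Lgi := L2_comb (c i) Lg (LF i).
by rewrite IH // ip_combr // big_cons addrA.
Qed.

(* Minimality along the line v + t f makes the quadratic in t have a minimum
   at t = 0, which kills its linear coefficient. *)
Lemma is_projL2_orth S u v f : L2 D u -> L2 D v -> L2 D f ->
  is_projL2 D S u v -> (forall t, S (fun x => v x + t * f x)) ->
  ip D (fun x => u x - v x) f = 0.
Proof.
move=> Lu Lv Lf [_ v_min] S_line.
apply: (lin_eq0_of_quad_ge0 (ip_ge0 f)) => t.
have := v_min _ (S_line (- t)).
have -> : (fun x => u x - (v x + - t * f x)) = (fun x => (u x - v x) + t * f x).
  by apply/funext => x; ring.
have Luv := L2_sub Lu Lv.
by rewrite ip_comb_sqr // -subr_ge0; lra.
Qed.

Lemma L2_of_sqr_le_indic (g : R -> R) (a b : R) (b0 b1 : bool) :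
  measurable_fun D g ->
  (forall x, D x -> g x ^+ 2 <= \1_[set` Interval (BSide b0 a) (BSide b1 b)] x) ->
  L2 D g.
Proof.
move=> mg g_le; apply/L2_integrableP; split => //.
have itv_int := integrableS (mu := leb) measurableT mD (@subsetT _ _)
  (integrable_indic_itv a b b0 b1).
apply: (le_integrable (mu := leb) mD _ _ itv_int).
  exact/measurable_EFinP/measurable_funX.
by move=> x Dx; rewrite /= lee_fin !ger0_norm ?sqr_ge0 ?g_le // indicE; case: (_ \in _).
Qed.

Section OrthogonalFamily.
Variables (n : nat) (F : 'I_n -> R -> R).
Hypothesis LF : forall i, L2 D (F i).
Hypothesis F_orth : forall i j, i != j -> ip D (F i) (F j) = 0.

Definition orth_coef b i := ip D (F i) b / ip D (F i) (F i).

Lemma ip_orth_residual b m : L2 D b ->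
  ip D (F m) (fun x => b x + \sum_(i < n) - orth_coef b i * F i x) = 0.
Proof.
move=> Lb; rewrite (ip_sumr _ _ (LF m) Lb LF) (bigD1 m) //=.
rewrite big1 => [|i /negbTE im]; last first.
  have -> : ip D (F m) (F i) = 0 by apply: F_orth; rewrite eq_sym im.
  by rewrite mulr0.
rewrite addr0 /orth_coef; have [Fm0|Fm_neq0] := eqVneq (ip D (F m) (F m)) 0.
  rewrite Fm0 mulr0 addr0; exact: (ip_orth_of_ip0 (LF m) Lb Fm0).
by rewrite mulNr divfK // addrN.
Qed.

Lemma ip_orth_kernel_expand e b : L2 D e -> L2 D b ->
  (forall k, L2 D k -> (forall i, ip D (F i) k = 0) -> ip D e k = 0) ->
  ip D e b = \sum_(i < n) orth_coef b i * ip D e (F i).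
Proof.
move=> Le Lb e_ker.
have := e_ker _ (L2_sum (index_enum 'I_n) (fun i => - orth_coef b i) Lb LF)
  (fun i => ip_orth_residual i Lb).
rewrite ip_sumr // => /eqP; rewrite addr_eq0 => /eqP ->.
by rewrite -sumrN; apply: eq_bigr => i _ /=; rewrite mulNr opprK.
Qed.

End OrthogonalFamily.

Lemma is_projL2_subspace_eq S v1 v2 w1 w2 :
  (forall f g c, S f -> S g -> S (fun x => f x + c * g x)) ->
  (forall f, S f -> L2 D f) -> L2 D v1 -> L2 D v2 ->
  is_projL2 D S v1 w1 -> is_projL2 D S v2 w2 ->
  (forall b, S b -> ip D (fun x => v1 x - v2 x) b = 0) -> L2eq D w1 w2.
Proof.
move=> S_comb S_L2 Lv1 Lv2 Q1 Q2 v12_orth.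
have [Lw1 Lw2] := (S_L2 _ Q1.1, S_L2 _ Q2.1).
have Ld := L2_sub Lw1 Lw2.
have [Lvw1 Lvw2] := (L2_sub Lv1 Lw1, L2_sub Lv2 Lw2).
have Sd : S (fun x => w1 x - w2 x).
  have -> : (fun x => w1 x - w2 x) = (fun x => w1 x + (-1) * w2 x).
    by apply/funext => x; rewrite mulN1r.
  exact: (S_comb _ _ _ Q1.1 Q2.1).
have res_orth v w : L2 D v -> is_projL2 D S v w ->
    ip D (fun x => v x - w x) (fun x => w1 x - w2 x) = 0.
  move=> Lv Pw.
  exact: (is_projL2_orth Lv (S_L2 _ Pw.1) Ld Pw (fun t => S_comb _ _ t Pw.1 Sd)).
suff dd : ip D (fun x => w1 x - w2 x) (fun x => w1 x - w2 x) = 0.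
  have := L2eq0_of_ip0 Ld dd; rewrite /L2eq; apply: filterS => x d0 Dx.
  by apply/eqP; rewrite -subr_eq0; apply/eqP/d0.
have dE : (fun x => w1 x - w2 x) =
    (fun x => (v1 x - v2 x) - ((v1 x - w1 x) - (v2 x - w2 x))).
  by apply/funext => x; ring.
rewrite {1}dE (ip_subl Ld (L2_sub Lv1 Lv2) (L2_sub Lvw1 Lvw2)) (ip_subl Ld Lvw1 Lvw2).
by rewrite v12_orth // !res_orth // !subrr.
Qed.

End L2InnerProduct.

Lemma Dset_measurable (R : realType) Dm : measurable (@Dset R Dm).
Proof.
case: Dm => [|T] /=; first exact: measurableT.
have -> : [set x : R | 0 <= x <= T%:R] = [set` `[0, T%:R]].
  by apply/seteqP; split => x /=; rewrite in_itv.
exact: measurable_itv.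
Qed.

Section Signals.
Variable R : realType.
Local Notation leb := (@lebesgue_measure R).
Local Notation I := [set w : R | - pi <= w <= pi].

Lemma I_itv : I = [set` `[- pi, pi]].
Proof. by apply/seteqP; split => x /=; rewrite in_itv. Qed.

Lemma I_measurable : measurable I.
Proof. by rewrite I_itv; exact: measurable_itv. Qed.

Lemma L2_trig (trig : R -> R) t : continuous trig ->
  (forall x, trig x ^+ 2 <= 1) -> L2 I (fun w => trig (w * t)).
Proof.
move=> trig_cont trig_le1.
apply: (L2_of_sqr_le_indic I_measurable (a := - pi) (b := pi) (b0 := true) (b1 := false)).
  apply: measurable_funS (@subsetT _ _) _ => //.
  exact/(measurableT_comp (continuous_measurable_fun trig_cont))/measurable_funM.
by move=> x Ix; rewrite I_itv in Ix; rewrite indicE (mem_set Ix).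
Qed.

Lemma L2_cos t : L2 I (fun w => cos (w * t)).
Proof.
apply: L2_trig; first exact: continuous_cos.
by move=> x; have := cos2Dsin2 x; have := sqr_ge0 (sin x); lra.
Qed.

Lemma L2_sin t : L2 I (fun w => sin (w * t)).
Proof.
apply: L2_trig; first exact: continuous_sin.
by move=> x; have := cos2Dsin2 x; have := sqr_ge0 (cos x); lra.
Qed.

Lemma inB_comb Dm (f g : R -> R) (c : R) : inB Dm f -> inB Dm g ->
  inB Dm (fun x => f x + c * g x).
Proof.
move=> [Lf Bf] [Lg Bg]; split; first exact: (L2_comb (Dset_measurable Dm) c Lf Lg).
case: Dm Lf Lg Bf Bg => [|T] _ _ /=.
- move=> [A1 [B1 [LA1 [LB1 E1]]]] [A2 [B2 [LA2 [LB2 E2]]]].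
  exists (fun x => A1 x + c * A2 x), (fun x => B1 x + c * B2 x).
  have LA := L2_comb I_measurable c LA1 LA2.
  have LB := L2_comb I_measurable c LB1 LB2.
  split=> //; split=> //.
  move: E1 E2; rewrite /L2eq; apply: filterS2 => x f_eq g_eq Dx.
  have [Lc Ls] := (L2_cos x, L2_sin x).
  have fourier_ip (A B : R -> R) : L2 I A -> L2 I B ->
      \int[leb]_(w in I) (A w * cos (w * x) - B w * sin (w * x)) =
      ip I A (fun w => cos (w * x)) - ip I B (fun w => sin (w * x)).
    move=> LA' LB'; apply: (RintegralB (mu := leb) I_measurable).
      exact: (L2_mul_integrable I_measurable LA' Lc).
    exact: (L2_mul_integrable I_measurable LB' Ls).
  rewrite f_eq // g_eq // !fourier_ip // !(ip_combl I_measurable) //; ring.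
- move=> [a1 [b1 E1]] [a2 [b2 E2]].
  exists (fun k => a1 k + c * a2 k), (fun k => b1 k + c * b2 k).
  move: E1 E2; rewrite /L2eq; apply: filterS2 => x f_eq g_eq Dx.
  rewrite f_eq // g_eq //.
  set S1 := \sum_(_ <= _ < _ | _) _; set S2 := \sum_(_ <= _ < _ | _) _.
  set S12 := \sum_(_ <= _ < _ | _) _.
  have -> : S12 = S1 + c * S2.
    by rewrite /S1 /S2 /S12 mulr_sumr -big_split /=; apply: eq_bigr => k _; ring.
  ring.
Qed.

Lemma hfun_L2 Dm (alpha : R) tt n : 0 <= alpha -> L2 (Dset Dm) (hfun alpha tt n).
Proof.
move=> alpha_ge0.
have hfunE : hfun alpha tt n = fun x =>
   \1_[set` Interval (BSide true (tt n.-1)) (BSide true (tt n))] x *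
   expR (- (alpha * (tt n - x))).
  apply/funext => x; rewrite /hfun indicE mem_setE in_itv /=.
  by case: ifP; rewrite ?mul1r ?mul0r.
apply: (L2_of_sqr_le_indic (Dset_measurable Dm)
  (a := tt n.-1) (b := tt n) (b0 := true) (b1 := true)).
  rewrite hfunE; apply: measurable_funM.
    exact: (measurable_indic (measurable_itv _)).
  apply: measurable_funS (@subsetT _ _) _ => //.
  apply: (measurableT_comp (@measurable_expR R)); apply: measurable_funN.
  by apply: measurable_funM => //; apply: measurable_funB.
move=> x _; rewrite /hfun indicE mem_setE in_itv /=.
case: ifP => [/andP [_ x_lt] |_] /=; last by rewrite expr0n.
have : expR (- (alpha * (tt n - x))) <= 1.
  by rewrite expR_le1 oppr_le0 mulr_ge0 // subr_ge0 ltW.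
by have := expR_ge0 (- (alpha * (tt n - x))); nra.
Qed.

Lemma hfun_orth Dm (alpha : R) tt m n : tt m <= tt n.-1 ->
  ip (Dset Dm) (hfun alpha tt m) (hfun alpha tt n) = 0.
Proof.
move=> tt_mn; rewrite /ip (eq_Rintegral (@lebesgue_measure R) (g := fun _ => 0)).
  by rewrite Rintegral_cst ?mul0r //; exact: Dset_measurable.
move=> x _; rewrite /hfun; case: ifP => [/andP [_ x_lt]|_]; last by rewrite mul0r.
by rewrite (lt_geF (lt_le_trans x_lt tt_mn)) /= mulr0.
Qed.

Section Sampling.
Variables (Dm : domain) (alpha : R) (tt : nat -> R) (N : nat).
Hypothesis alpha_ge0 : 0 <= alpha.
Hypothesis tt_lt : forall n, (n < N)%N -> tt n < tt n.+1.
Local Notation D := (@Dset R Dm).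

Lemma hfun_pairwise_orth (i j : 'I_N) : i != j ->
  ip D (hfun alpha tt i.+1) (hfun alpha tt j.+1) = 0.
Proof.
have tt_le m n : (m <= n)%N -> (n <= N)%N -> tt m <= tt n.
  elim: n => [|n IH]; first by rewrite leqn0 => /eqP ->.
  rewrite leq_eqVlt ltnS => /orP [/eqP -> _ //|mn nN].
  exact: le_trans (IH mn (ltnW nN)) (ltW (tt_lt nN)).
move=> ij_neq; case: (ltngtP i j) => [ij|ji|/val_inj ij_eq].
- by rewrite hfun_orth //=; apply: tt_le => //; exact: ltnW.
- by rewrite ipC hfun_orth //=; apply: tt_le => //; exact: ltnW.
- by rewrite ij_eq eqxx in ij_neq.
Qed.

Lemma Hop_comb f g c (i : 'I_N) : L2 D f -> L2 D g ->
  Hop Dm alpha tt (fun x => f x + c * g x) i =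
  Hop Dm alpha tt f i + c * Hop Dm alpha tt g i.
Proof.
move=> Lf Lg.
exact: (ip_combr (Dset_measurable Dm) c (hfun_L2 Dm tt i.+1 alpha_ge0) Lf Lg).
Qed.

Lemma Cset_line_ker (theta : 'I_N -> R) v k t :
  Cset Dm alpha tt theta v -> L2 D k -> (forall i : 'I_N, Hop Dm alpha tt k i = 0) ->
  Cset Dm alpha tt theta (fun x => v x + t * k x).
Proof.
move=> [Lv Hv] Lk Hk; split; first exact: (L2_comb (Dset_measurable Dm) t Lv Lk).
by move=> i; rewrite Hop_comb // Hv Hk mulr0 addr0.
Qed.

Lemma ranH_line b' b t : inB Dm b' -> inB Dm b ->
  ranH Dm alpha tt (fun i : 'I_N => Hop Dm alpha tt b' i + t * Hop Dm alpha tt b i).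
Proof.
move=> Bb' Bb; exists (fun x => b' x + t * b x); split; first exact: inB_comb.
by apply/funext => i; rewrite Hop_comb //; [exact: Bb'.1|exact: Bb.1].
Qed.

Lemma ipN_ge0 (x : 'I_N -> R) : 0 <= ipN Dm alpha tt x x.
Proof. by apply: sumr_ge0 => i _; rewrite divr_ge0 ?ip_ge0 // -expr2 sqr_ge0. Qed.

Lemma ipN_comb_sqr (x y : 'I_N -> R) t :
  ipN Dm alpha tt (fun i => x i + t * y i) (fun i => x i + t * y i) =
  ipN Dm alpha tt x x + 2 * t * ipN Dm alpha tt x y + t ^+ 2 * ipN Dm alpha tt y y.
Proof. by rewrite /ipN !mulr_sumr -!big_split /=; apply: eq_bigr => i _; ring. Qed.

Lemma is_projN_ranH_orth (theta thetabar : 'I_N -> R) b :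
  is_projN Dm alpha tt (@ranH R Dm alpha tt N) theta thetabar -> inB Dm b ->
  ipN Dm alpha tt (fun i => theta i - thetabar i) (Hop Dm alpha tt b) = 0.
Proof.
move=> Pthetabar Bb; have [[b' [Bb' thetabarE]] thetabar_min] := Pthetabar.
apply: (lin_eq0_of_quad_ge0 (ipN_ge0 _)) => t.
have := thetabar_min _ (ranH_line (- t) Bb' Bb).
have -> : (fun i => theta i - (Hop Dm alpha tt b' i + - t * Hop Dm alpha tt b i)) =
    (fun i => (theta i - thetabar i) + t * Hop Dm alpha tt b i).
  by apply/funext => i; rewrite thetabarE; ring.
by rewrite ipN_comb_sqr -addrA lerDl; apply.
Qed.

Lemma projC_orth_ker (theta : 'I_N -> R) u v k : L2 D u ->
  is_projL2 D (Cset Dm alpha tt theta) u v -> L2 D k ->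
  (forall i : 'I_N, Hop Dm alpha tt k i = 0) -> ip D (fun x => u x - v x) k = 0.
Proof.
move=> Lu Pv Lk Hk; have [[Lv _] _] := Pv.
apply: (is_projL2_orth (Dset_measurable Dm) Lu Lv Lk Pv) => t.
exact: (Cset_line_ker t Pv.1 Lk Hk).
Qed.

(* Expanding b along the mutually orthogonal h_n, which is legitimate since
   v1 - v2 is orthogonal to ker H, turns <v1 - v2, b> into
   <theta1 - theta2, H b>_N. *)
Lemma projC_sub_orth_inB (theta1 theta2 : 'I_N -> R) u v1 v2 : L2 D u ->
  is_projL2 D (Cset Dm alpha tt theta1) u v1 ->
  is_projL2 D (Cset Dm alpha tt theta2) u v2 ->
  (forall b, inB Dm b ->
    ipN Dm alpha tt (fun i => theta1 i - theta2 i) (Hop Dm alpha tt b) = 0) ->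
  forall b, inB Dm b -> ip D (fun x => v1 x - v2 x) b = 0.
Proof.
move=> Lu P1 P2 theta_orth b Bb; have mD : measurable D := Dset_measurable Dm.
have [[[Lv1 Hv1] _] [[Lv2 Hv2] _]] := (P1, P2).
have Lh (i : 'I_N) : L2 D (hfun alpha tt i.+1) by exact: hfun_L2.
have v12_ker k : L2 D k -> (forall i : 'I_N, ip D (hfun alpha tt i.+1) k = 0) ->
    ip D (fun x => v1 x - v2 x) k = 0.
  move=> Lk Hk; have -> : (fun x => v1 x - v2 x) = (fun x => (u x - v2 x) - (u x - v1 x)).
    by apply/funext => x; ring.
  rewrite (ip_subl mD Lk (L2_sub mD Lu Lv2) (L2_sub mD Lu Lv1)).
  by rewrite (projC_orth_ker Lu P1) // (projC_orth_ker Lu P2) // subrr.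
have v12_h (i : 'I_N) :
    ip D (fun x => v1 x - v2 x) (hfun alpha tt i.+1) = theta1 i - theta2 i.
  by rewrite (ip_subl mD (Lh i) Lv1 Lv2) ![ip D _ (hfun _ _ _)]ipC -Hv1 -Hv2.
rewrite (ip_orth_kernel_expand mD Lh hfun_pairwise_orth (L2_sub mD Lv1 Lv2) Bb.1 v12_ker).
apply: (etrans _ (theta_orth b Bb)); apply: eq_bigr => i _.
by rewrite v12_h /orth_coef mulrC mulrA.
Qed.

End Sampling.

End Signals.

Theorem proposition1 (R : realType) (Dm : domain) (alpha : R) (N : nat)
  (tt : nat -> R) (theta thetabar : 'I_N -> R) :
  domain_ok Dm -> 0 <= alpha -> (1 <= N)%N ->
  tt 0%N = 0 -> (forall n, (n < N)%N -> tt n < tt n.+1) ->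
  (forall n, (n <= N)%N -> Dset Dm (tt n)) ->
  is_projN Dm alpha tt (@ranH R Dm alpha tt N) theta thetabar ->
  forall u v1 w1 v2 w2 : R -> R,
    L2 (Dset Dm) u ->
    is_projL2 (Dset Dm) (Cset Dm alpha tt theta) u v1 ->
    is_projL2 (Dset Dm) (inB Dm) v1 w1 ->
    is_projL2 (Dset Dm) (Cset Dm alpha tt thetabar) u v2 ->
    is_projL2 (Dset Dm) (inB Dm) v2 w2 ->
    L2eq (Dset Dm) w1 w2.
Proof.
move=> _ alpha_ge0 _ _ tt_lt _ Pthetabar u v1 w1 v2 w2 Lu P1 Q1 P2 Q2.
apply: (is_projL2_subspace_eq (Dset_measurable Dm) (fun _ _ c => inB_comb c)
  (fun _ Bf => Bf.1) P1.1.1 P2.1.1 Q1 Q2).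
apply: (projC_sub_orth_inB alpha_ge0 tt_lt Lu P1 P2) => b.
exact: is_projN_ranH_orth.
Qed.
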